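(* Let $\pmb x,\pmb y\in\{0,1\}^n$, $\pmb\delta\in\{0,1\}^n$, $\hat{\pmb c},\pmb d\in\mathbb R^n_{\ge0}$ and an integer $\Gamma'\ge0$ be fixed. Then the balancing problem \[\min\Big\{\sum_{i\in[n]}(\hat c_i+d_i\delta_i+d_i\epsilon_i)(x_i-y_i)\ :\ \sum_{i\in[n]}\epsilon_i\le\Gamma',\ \pmb\epsilon\in\{0,1\}^n\Big\}\] has an optimal solution $\pmb\epsilon$ with $\epsilon_i+x_i\le1$ for all $i\in[n]$.
   Context: $[n]=\{1,\dots,n\}$. *)

From mathcomp Require Import all_boot all_order all_algebra.
From mathcomp Require Import reals.
Set Implicit Arguments. Unset Strict Implicit. Unset Printing Implicit Defensive.
Import Order.TTheory GRing.Theory Num.Theory.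
Local Open Scope ring_scope.

(* 0/1 vectors are represented as 'I_n -> bool; b%:R is 0 or 1. *)

Definition balancing_obj (R : realType) (n : nat)
  (x y delta : 'I_n -> bool) (c d : 'I_n -> R) (eps : 'I_n -> bool) : R :=
  \sum_(i < n) (c i + d i * (delta i)%:R + d i * (eps i)%:R)
                 * ((x i)%:R - (y i)%:R).

Definition balancing_feasible (n : nat) (Gamma' : nat) (eps : 'I_n -> bool) : Prop :=
  (\sum_(i < n) (eps i : nat) <= Gamma')%N.

From mathcomp Require Import all_boot all_order all_algebra.
From mathcomp Require Import reals.
Set Implicit Arguments. Unset Strict Implicit. Unset Printing Implicit Defensive.
Import Order.TTheory GRing.Theory Num.Theory.
Local Open Scope ring_scope.

(* Take any optimal eps and switch off every eps_i with x_i = 1.  This keeps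
   the budget constraint, and it cannot increase the objective: such a term
   has the factor x_i - y_i >= 0, so removing d_i eps_i >= 0 from its first
   factor only lowers it. *)

(* Functions I -> T do not form a finType, so the minimum is taken over
   {ffun I -> T}; the extensionality hypotheses transfer it back. *)
Lemma exists_fun_argmin (I T : finType) (disp : Order.disp_t)
    (R : orderType disp) (P : pred (I -> T)) (F : (I -> T) -> R) (f0 : I -> T) :
  (forall f g, f =1 g -> P f = P g) -> (forall f g, f =1 g -> F f = F g) ->
  P f0 -> exists2 f, P f & forall g, P g -> (F f <= F g)%O.
Proof.
move=> Pext Fext Pf0.
have Pffun (g : I -> T) : P [ffun i => g i] = P g by apply: Pext => i; rewrite ffunE.
have Fffun (g : I -> T) : F [ffun i => g i] = F g by apply: Fext => i; rewrite ffunE.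
have Pf0' : P [ffun i => f0 i] by rewrite Pffun.
case: (@arg_minP _ _ _ [ffun i => f0 i] (fun f : {ffun I -> T} => P f)
                 (fun f : {ffun I -> T} => F f) Pf0') => f Pf fmin.
by exists f => // g Pg; rewrite -(Fffun g); apply: fmin; rewrite /= Pffun.
Qed.

Definition clear_on (n : nat) (x eps : 'I_n -> bool) : 'I_n -> bool :=
  fun i => eps i && ~~ x i.

Lemma clear_on_disjoint (n : nat) (x eps : 'I_n -> bool) (i : 'I_n) :
  ((clear_on x eps i : nat) + (x i : nat) <= 1)%N.
Proof. by rewrite /clear_on; case: (eps i); case: (x i). Qed.

Lemma balancing_feasible_clear_on (n Gamma' : nat) (x eps : 'I_n -> bool) :
  balancing_feasible Gamma' eps -> balancing_feasible Gamma' (clear_on x eps).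
Proof.
apply: leq_trans; apply: leq_sum => i _.
by rewrite /clear_on; case: (eps i); case: (x i).
Qed.

Lemma balancing_obj_ext (R : realType) (n : nat) (x y delta : 'I_n -> bool)
    (c d : 'I_n -> R) (eps eps' : 'I_n -> bool) :
  eps =1 eps' -> balancing_obj x y delta c d eps = balancing_obj x y delta c d eps'.
Proof. by move=> e; apply: eq_bigr => i _; rewrite e. Qed.

Lemma balancing_obj_clear_on (R : realType) (n : nat) (x y delta : 'I_n -> bool)
    (c d : 'I_n -> R) (eps : 'I_n -> bool) :
  (forall i, 0 <= d i) ->
  balancing_obj x y delta c d (clear_on x eps) <= balancing_obj x y delta c d eps.
Proof.
move=> d_ge0; apply: ler_sum => i _; rewrite /clear_on.
case: (x i); case: (y i); case: (eps i) => /=; rewrite ?subrr ?mulr0 //.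
by rewrite subr0 !mulr1 lerD2l.
Qed.

Theorem lemma1 (R : realType) (n : nat) (x y delta : 'I_n -> bool)
  (c d : 'I_n -> R) (Gamma' : nat)
  (hc : forall i, 0 <= c i) (hd : forall i, 0 <= d i) :
  exists eps : 'I_n -> bool,
    [/\ balancing_feasible Gamma' eps,
        (forall eps' : 'I_n -> bool, balancing_feasible Gamma' eps' ->
           balancing_obj x y delta c d eps <= balancing_obj x y delta c d eps')
      & forall i : 'I_n, ((eps i : nat) + (x i : nat) <= 1)%N].
Proof.
have feasible_ext (e e' : 'I_n -> bool) : e =1 e' ->
    (\sum_(i < n) (e i : nat) <= Gamma')%N = (\sum_(i < n) (e' i : nat) <= Gamma')%N.
  by move=> ee'; under eq_bigr do rewrite ee'.
have feasible0 : balancing_feasible Gamma' (fun _ : 'I_n => false).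
  by rewrite /balancing_feasible big1.
have [e feasible_e e_min] := exists_fun_argmin feasible_ext
  (@balancing_obj_ext R n x y delta c d) feasible0.
exists (clear_on x e); split; last exact: clear_on_disjoint.
- exact: balancing_feasible_clear_on.
- move=> eps' feasible_eps'.
  exact: le_trans (balancing_obj_clear_on _ _ _ _ _ hd) (e_min _ feasible_eps').
Qed.
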